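(* Let $n>1$, let $\mathbf{A}\in\mathbb{R}^{n\times n}$ be symmetric positive definite with $\mathbf{I}-\mathbf{A}$ invertible, $\mathbf{b}\in\mathbb{R}^n$, $\mathcal{FP}(\mathbf{x})=\mathbf{A}\mathbf{x}+\mathbf{b}$, and $\mathbf{x}^\star$ the unique fixed point of $\mathcal{FP}$. Let $\mathbf{v}_1,\mathbf{v}_2$ be two orthogonal eigenvectors of $\mathbf{A}$ with eigenvalues $\lambda_1,\lambda_2$, such that at most one of $\lambda_1,\lambda_2$ is larger than $1$ and none equals $1$, and let $\mathbf{x}^0$ satisfy $\mathbf{x}^0-\mathbf{x}^\star\in\mathrm{span}\{\mathbf{v}_1,\mathbf{v}_2\}$. Then the sequence $\{\mathbf{x}^i\}$ generated by AA$^\star$(1) applied to $\mathcal{FP}$ from $\mathbf{x}^0$ converges to $\mathbf{x}^\star$ (even though the fixed-point iteration $\mathcal{FP}$ itself need not be contractive).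
   Context: Let $\Delta\mathcal{FP}(\mathbf{x})=\mathcal{FP}(\mathbf{x})-\mathbf{x}$ and $\|\cdot\|$ the Euclidean norm. The restarted Anderson acceleration AA$^\star$(1) is the iteration: for $i=0,2,4,\dots$, set $\mathbf{x}^{i+1}=\mathcal{FP}(\mathbf{x}^i)$; choose $\alpha^{(i+1)}\in\mathbb{R}$ minimizing $\|\Delta\mathcal{FP}(\mathbf{x}^{i+1})+\alpha^{(i+1)}(\Delta\mathcal{FP}(\mathbf{x}^i)-\Delta\mathcal{FP}(\mathbf{x}^{i+1}))\|$; set $\mathbf{x}^{i+2}=\mathcal{FP}(\mathbf{x}^{i+1})+\alpha^{(i+1)}(\mathcal{FP}(\mathbf{x}^i)-\mathcal{FP}(\mathbf{x}^{i+1}))$. *)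

From HB Require Import structures.
From mathcomp Require Import all_boot all_order all_algebra.
From mathcomp Require Import all_classical all_reals all_analysis.
Set Implicit Arguments. Unset Strict Implicit. Unset Printing Implicit Defensive.
Import Order.TTheory GRing.Theory Num.Theory.
Local Open Scope ring_scope.

Definition enorm (R : realType) (n : nat) (v : 'cV[R]_n) : R :=
  Num.sqrt (\sum_(i < n) v i ord0 ^+ 2).

Definition dotv (R : realType) (n : nat) (u v : 'cV[R]_n) : R :=
  \sum_(i < n) u i ord0 * v i ord0.

Definition FP (R : realType) (n : nat) (A : 'M[R]_n) (b : 'cV[R]_n)
  (x : 'cV[R]_n) : 'cV[R]_n := A *m x + b.

Definition DFP (R : realType) (n : nat) (A : 'M[R]_n) (b : 'cV[R]_n)
  (x : 'cV[R]_n) : 'cV[R]_n := FP A b x - x.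

Definition spd (R : realType) (n : nat) (A : 'M[R]_n) : Prop :=
  A^T = A /\ forall v : 'cV[R]_n, v != 0 -> 0 < dotv v (A *m v).

(* (x, alpha) is a run of the restarted Anderson acceleration AA*(1) on FP
   starting from x0: for every even i, x^{i+1} = FP(x^i), alpha^{(i+1)} is a
   minimizer of the Euclidean residual norm, and
   x^{i+2} = FP(x^{i+1}) + alpha^{(i+1)} (FP(x^i) - FP(x^{i+1})).
   (Any choice of minimizer is allowed in case of non-uniqueness.) *)
Definition AAstar1_run (R : realType) (n : nat) (A : 'M[R]_n) (b : 'cV[R]_n)
  (x0 : 'cV[R]_n) (x : nat -> 'cV[R]_n) (alpha : nat -> R) : Prop :=
  x 0%N = x0 /\
  forall i : nat, ~~ odd i ->
    [/\ x i.+1 = FP A b (x i),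
        (forall beta : R,
           enorm (DFP A b (x i.+1) + alpha i.+1 *: (DFP A b (x i) - DFP A b (x i.+1)))
           <= enorm (DFP A b (x i.+1) + beta *: (DFP A b (x i) - DFP A b (x i.+1))))
      & x i.+2 = FP A b (x i.+1) + alpha i.+1 *: (FP A b (x i) - FP A b (x i.+1))].

(** Write the error as x - x* = c1 v1 + c2 v2.  One AA*(1) step (two iterations)
    maps (c1, c2) to (l1 c1 t1, l2 c2 t2), where the gains t_j = l_j - alpha (l_j - 1)
    are pinned down by the normal equation of the least-squares problem defining
    alpha; they depend on c only through the residual weights
    w_j = |v_j|^2 ((l_j - 1) c_j)^2.  The induced map on the ratio w1 : w2 is an
    involution r |-> K / r, so four iterations multiply both coefficients by one
    common factor.  Cauchy-Schwarz bounds this factor by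
    (l1 l2 (l2 - l1))^2 / (|l1 - 1| l1 + |l2 - 1| l2)^2, which is < 1 because
    l1, l2 > 0 (A is positive definite) differ from 1 and are not both above 1. *)

From HB Require Import structures.
From mathcomp Require Import all_boot all_order all_algebra.
From mathcomp Require Import all_classical all_reals all_analysis.
From mathcomp Require Import ring lra.
Import Order.TTheory GRing.Theory Num.Theory.
Import numFieldNormedType.Exports.
Local Open Scope classical_set_scope.
Local Open Scope ring_scope.
Set Implicit Arguments. Unset Strict Implicit.

Lemma quadratic_min_eq0 (R : realFieldType) (Q : R -> R) (a g h : R) :
  0 <= h -> (forall x, Q x = Q a + (x - a) * g + (x - a) ^+ 2 * h) ->
  (forall x, Q a <= Q x) -> g = 0.
Proof.
move=> h_ge0 Q_expand Q_min.
have h1_gt0 : 0 < h + 1 by rewrite ltr_wpDl.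
have := Q_min (a - g / (h + 1)); rewrite [in X in _ <= X]Q_expand -addrA.
have -> : (a - g / (h + 1) - a) * g + (a - g / (h + 1) - a) ^+ 2 * h
          = - (g / (h + 1)) ^+ 2 by field; rewrite (gt_eqF h1_gt0).
rewrite lerDl oppr_ge0 => sq_le0.
have /eqP : g / (h + 1) = 0 by apply/eqP; rewrite -sqrf_eq0 eq_le sq_le0 sqr_ge0.
by rewrite mulf_eq0 invr_eq0 (gt_eqF h1_gt0) orbF => /eqP.
Qed.

Lemma eigen_gap_lt (R : realFieldType) (l1 l2 : R) :
  0 < l1 -> 0 < l2 -> l1 != 1 -> l2 != 1 -> ~ (1 < l1 /\ 1 < l2) ->
  l1 * l2 * `|l2 - l1| < `|l1 - 1| * l1 + `|l2 - 1| * l2.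
Proof.
wlog le12 : l1 l2 / l1 <= l2 => [wlog_le12|].
  case: (leP l1 l2) => [|/ltW le21]; first exact: wlog_le12.
  move=> *; rewrite distrC [X in _ < X]addrC (mulrC l1); apply: wlog_le12 => //; tauto.
move=> l1_gt0 l2_gt0 l1_neq1 l2_neq1 not_both_gt1.
have -> : `|l2 - l1| = l2 - l1 by rewrite ger0_norm // subr_ge0.
case: (ltgtP l2 1) l2_neq1 => // [l2_lt1|l2_gt1] _.
- rewrite !ltr0_norm ?subr_lt0 ?(le_lt_trans le12) //.
  have : l1 * (l2 - l1) < l1 * (1 - l1) by rewrite ltr_pM2l // ltrD2r.
  have : 0 < l2 * (1 - l2) by rewrite mulr_gt0 // subr_gt0.
  nra.
- have l1_lt1 : l1 < 1.
    by case: (ltgtP l1 1) l1_neq1 => // l1_gt1; case: not_both_gt1.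
  rewrite ltr0_norm ?subr_lt0 // gtr0_norm ?subr_gt0 //.
  have : 0 < (l2 - l1) * (1 - l1) * (l2 - 1).
    by rewrite !mulr_gt0 // subr_gt0 // (lt_trans l1_lt1).
  nra.
Qed.

Lemma cvg_periodic_contraction (R : realType) (u : nat -> R) (p : nat) (q : R) :
  (0 < p)%N -> 0 <= q -> q < 1 -> (forall i, 0 <= u i) ->
  (forall i, u (i + p)%N <= q * u i) -> u @ \oo --> 0.
Proof.
move=> p_gt0 q_ge0 q_lt1 u_ge0 contract.
have iter_contract k r : u (r + k * p)%N <= q ^+ k * u r.
  elim: k => [|k IHk]; first by rewrite mul0n addn0 expr0 mul1r.
  rewrite mulSn addnCA addnC exprS -mulrA.
  by apply: le_trans (contract _) _; rewrite ler_wpM2l // addnC.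
have u_le i : u i <= geometric (\sum_(j < p) u j) q (i %/ p)%N.
  rewrite {1}(divn_eq i p) addnC /geometric /= mulrC.
  apply: le_trans (iter_contract _ _) _; rewrite ler_wpM2l ?exprn_ge0 //.
  by rewrite (bigD1 (Ordinal (ltn_pmod i p_gt0))) //= lerDl sumr_ge0.
have geo_cvg : geometric (\sum_(j < p) u j) q \o (fun i => (i %/ p)%N) @ \oo --> 0.
  apply: (cvg_comp _ _ (cvg_divnr _ p_gt0)).
  by apply: cvg_geometric; rewrite ger0_norm.
apply: (squeeze_cvgr _ (cvg_cst 0) geo_cvg).
by near=> i; rewrite u_ge0 u_le.
Unshelve. all: by end_near.
Qed.

Section AAStepCoordinates.
Variables (R : realFieldType) (l1 l2 N1 N2 : R).

Definition wnorm2 (c : R * R) : R := N1 * c.1 ^+ 2 + N2 * c.2 ^+ 2.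

Definition aa_update (al : R) (c : R * R) : R * R :=
  (l1 * c.1 * (l1 - al * (l1 - 1)), l2 * c.2 * (l2 - al * (l2 - 1))).

Definition aa_residual (al : R) (c : R * R) : R * R :=
  ((l1 - 1) * c.1 * (l1 - al * (l1 - 1)), (l2 - 1) * c.2 * (l2 - al * (l2 - 1))).

Definition aa_weight1 (c : R * R) : R := N1 * ((l1 - 1) * c.1) ^+ 2.
Definition aa_weight2 (c : R * R) : R := N2 * ((l2 - 1) * c.2) ^+ 2.

Definition aa_denom (c : R * R) : R :=
  aa_weight1 c * (l1 - 1) ^+ 2 + aa_weight2 c * (l2 - 1) ^+ 2.

(* The gains l_j - al (l_j - 1) at the minimizing [al], solved from the normal
   equation (see [aa_update_minE]). *)
Definition aa_step (c : R * R) : R * R :=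
  let s := (l2 - l1) / aa_denom c in
  (l1 * c.1 * (s * (l2 - 1) * aa_weight2 c),
   l2 * c.2 * - (s * (l1 - 1) * aa_weight1 c)).

Definition aa_factor (c : R * R) : R :=
  (l1 * l2 * (l2 - l1)) ^+ 2 * (aa_weight1 c * aa_weight2 c)
  / (aa_denom c * (l1 ^+ 2 * aa_weight2 c + l2 ^+ 2 * aa_weight1 c)).

Definition aa_rate : R :=
  (l1 * l2 * (l2 - l1)) ^+ 2 / (`|l1 - 1| * l1 + `|l2 - 1| * l2) ^+ 2.

Hypotheses (N1_gt0 : 0 < N1) (N2_gt0 : 0 < N2).
Hypotheses (l1_gt0 : 0 < l1) (l2_gt0 : 0 < l2) (l1_neq1 : l1 != 1) (l2_neq1 : l2 != 1).

Lemma wnorm2_ge0 (c : R * R) : 0 <= wnorm2 c.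
Proof. by rewrite addr_ge0 // mulr_ge0 ?sqr_ge0 // ltW. Qed.

Lemma aa_weight1_ge0 (c : R * R) : 0 <= aa_weight1 c.
Proof. by rewrite mulr_ge0 ?sqr_ge0 // ltW. Qed.

Lemma aa_weight2_ge0 (c : R * R) : 0 <= aa_weight2 c.
Proof. by rewrite mulr_ge0 ?sqr_ge0 // ltW. Qed.

Lemma aa_denom_ge0 (c : R * R) : 0 <= aa_denom c.
Proof. by rewrite addr_ge0 // mulr_ge0 ?sqr_ge0 ?aa_weight1_ge0 ?aa_weight2_ge0. Qed.

Lemma aa_denom_eq0 (c : R * R) : aa_denom c = 0 -> c = 0.
Proof.
have w1_ge0 := mulr_ge0 (aa_weight1_ge0 c) (sqr_ge0 (l1 - 1)).
have w2_ge0 := mulr_ge0 (aa_weight2_ge0 c) (sqr_ge0 (l2 - 1)).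
move/eqP; rewrite paddr_eq0 // /aa_weight1 /aa_weight2.
rewrite !mulf_eq0 !subr_eq0 (gt_eqF N1_gt0) (gt_eqF N2_gt0).
rewrite (negPf l1_neq1) (negPf l2_neq1) /= !orbF !orbb.
by case: c {w1_ge0 w2_ge0} => c1 c2 /= /andP[/eqP-> /eqP->].
Qed.

Lemma aa_update_minE (al : R) (c : R * R) :
  (forall be, wnorm2 (aa_residual al c) <= wnorm2 (aa_residual be c)) ->
  aa_update al c = aa_step c.
Proof.
move=> al_min; set t1 := l1 - al * (l1 - 1); set t2 := l2 - al * (l2 - 1).
have normal_eq : aa_weight1 c * (l1 - 1) * t1 + aa_weight2 c * (l2 - 1) * t2 = 0.
  have expand be : wnorm2 (aa_residual be c) = wnorm2 (aa_residual al c)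
      + (be - al) * (- 2 * (aa_weight1 c * (l1 - 1) * t1 + aa_weight2 c * (l2 - 1) * t2))
      + (be - al) ^+ 2 * aa_denom c.
    by rewrite /wnorm2 /aa_denom /aa_weight1 /aa_weight2 /t1 /t2 /=; ring.
  have /eqP := quadratic_min_eq0 (aa_denom_ge0 c) expand al_min.
  by rewrite mulf_eq0 oppr_eq0 pnatr_eq0 => /eqP.
have [/aa_denom_eq0 -> | denom_neq0] := eqVneq (aa_denom c) 0.
  by rewrite /aa_update /aa_step /= !(mulr0, mul0r).
have t1E : aa_denom c * t1 = (l2 - l1) * (l2 - 1) * aa_weight2 c.
  by rewrite -[RHS]addr0 -(mulr0 (l1 - 1)) -normal_eq /aa_denom /t1 /t2; ring.
have t2E : aa_denom c * t2 = - ((l2 - l1) * (l1 - 1) * aa_weight1 c).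
  by rewrite -[RHS]addr0 -(mulr0 (l2 - 1)) -normal_eq /aa_denom /t1 /t2; ring.
rewrite /aa_update -/t1 -/t2 -(mulKf denom_neq0 t1) -(mulKf denom_neq0 t2).
by rewrite t1E t2E /aa_step; congr pair; ring.
Qed.

Lemma aa_step_twice (c : R * R) :
  aa_step (aa_step c) = (aa_factor c * c.1, aa_factor c * c.2).
Proof.
set s := (l2 - l1) / aa_denom c; set w1 := aa_weight1 c; set w2 := aa_weight2 c.
set S := l1 ^+ 2 * w2 + l2 ^+ 2 * w1.
have w1_step : aa_weight1 (aa_step c) = w1 * (l1 * s * (l2 - 1) * w2) ^+ 2.
  by rewrite /aa_weight1 /aa_step /= -/s -/w2 /w1 /aa_weight1; ring.
have w2_step : aa_weight2 (aa_step c) = w2 * (l2 * s * (l1 - 1) * w1) ^+ 2.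
  by rewrite /aa_weight2 /aa_step /= -/s -/w1 /w2 /aa_weight2; ring.
have denom_step : aa_denom (aa_step c) = (s * (l1 - 1) * (l2 - 1)) ^+ 2 * (w1 * w2) * S.
  by rewrite /aa_denom w1_step w2_step /S; ring.
have factorE : aa_factor c = (l1 * l2) ^+ 2 * (l2 - l1) * (s * (w1 * w2)) / S.
  by rewrite /aa_factor -/w1 -/w2 -/S /s invfM; ring.
rewrite factorE {1}/aa_step denom_step w1_step w2_step /aa_step /= -/s -/w1 -/w2.
have w1_ge0 : 0 <= w1 := aa_weight1_ge0 c.
have w2_ge0 : 0 <= w2 := aa_weight2_ge0 c.
(* Opaque, so that [mulf_eq0] below does not see through their products. *)
clearbody s w1 w2.
have [/eqP|nondeg] := eqVneq (s * (w1 * w2)) 0.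
  by rewrite !mulf_eq0 => /or3P[]/eqP->; rewrite !(mulr0, mul0r, oppr0, invr0).
move: nondeg; rewrite !mulf_eq0 !negb_or => /and3P[s_neq0 w1_neq0 w2_neq0].
have S_gt0 : 0 < S by rewrite addr_gt0 // mulr_gt0 ?exprn_gt0 // lt_def ?w1_neq0 ?w2_neq0.
by congr pair; field;
  rewrite (gt_eqF S_gt0) w1_neq0 w2_neq0 s_neq0 !subr_eq0 l1_neq1 l2_neq1.
Qed.

Lemma aa_factor_ge0 (c : R * R) : 0 <= aa_factor c.
Proof.
have w1_ge0 := aa_weight1_ge0 c; have w2_ge0 := aa_weight2_ge0 c.
apply: divr_ge0; first exact: mulr_ge0 (sqr_ge0 _) (mulr_ge0 w1_ge0 w2_ge0).
apply: mulr_ge0 (aa_denom_ge0 c) (addr_ge0 _ _).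
  exact: mulr_ge0 (sqr_ge0 _) w2_ge0.
exact: mulr_ge0 (sqr_ge0 _) w1_ge0.
Qed.

Lemma aa_rate_ge0 : 0 <= aa_rate.
Proof. by rewrite divr_ge0 ?sqr_ge0. Qed.

Lemma aa_factor_le_rate (c : R * R) : aa_factor c <= aa_rate.
Proof.
rewrite /aa_factor /aa_rate -mulrA ler_wpM2l ?sqr_ge0 //.
set w1 := aa_weight1 c; set w2 := aa_weight2 c; set D := aa_denom c.
set S := l1 ^+ 2 * w2 + l2 ^+ 2 * w1; set M := `|l1 - 1| * l1 + `|l2 - 1| * l2.
have cauchy_schwarz : M ^+ 2 * (w1 * w2) <= D * S.
  rewrite -subr_ge0.
  have -> : D * S - M ^+ 2 * (w1 * w2) = (w1 * `|l1 - 1| * l2 - w2 * `|l2 - 1| * l1) ^+ 2.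
    rewrite /D /aa_denom -/w1 -/w2 /S /M.
    by rewrite -(real_normK (num_real (l1 - 1))) -(real_normK (num_real (l2 - 1))); ring.
  exact: sqr_ge0.
have [DS0|DS_neq0] := eqVneq (D * S) 0; first by rewrite DS0 invr0 mulr0 invr_ge0 sqr_ge0.
have DS_gt0 : 0 < D * S.
  rewrite lt_def DS_neq0 (le_trans _ cauchy_schwarz) //.
  exact: mulr_ge0 (sqr_ge0 _) (mulr_ge0 (aa_weight1_ge0 c) (aa_weight2_ge0 c)).
have M_gt0 : 0 < M ^+ 2.
  by rewrite exprn_gt0 // addr_gt0 // mulr_gt0 // normr_gt0 subr_eq0.
by rewrite ler_pdivrMr // ler_pdivlMl.
Qed.

Lemma aa_rate_lt1 : ~ (1 < l1 /\ 1 < l2) -> aa_rate < 1.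
Proof.
move=> not_both_gt1.
have gap := eigen_gap_lt l1_gt0 l2_gt0 l1_neq1 l2_neq1 not_both_gt1.
have M_gt0 : 0 < (`|l1 - 1| * l1 + `|l2 - 1| * l2) ^+ 2.
  by rewrite exprn_gt0 // (le_lt_trans _ gap) // !mulr_ge0 // ltW.
rewrite /aa_rate ltr_pdivrMr // mul1r -(real_normK (num_real (_ * _ * _))) !normrM.
by rewrite ltrXn2r // ?normr_ge0 ?(gtr0_norm l1_gt0) ?(gtr0_norm l2_gt0) // ltW.
Qed.
End AAStepCoordinates.


Lemma enormZ (R : realType) (n : nat) (k : R) (v : 'cV[R]_n) :
  enorm (k *: v) = `|k| * enorm v.
Proof.
rewrite /enorm -sqrtr_sqr -sqrtrM ?sqr_ge0 // mulr_sumr.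
by congr Num.sqrt; apply: eq_bigr => i _; rewrite mxE exprMn.
Qed.

Lemma dotvZr (R : realType) (n : nat) (k : R) (u v : 'cV[R]_n) :
  dotv u (k *: v) = k * dotv u v.
Proof. by rewrite /dotv mulr_sumr; apply: eq_bigr => i _; rewrite mxE mulrCA. Qed.

Lemma dotv_ge0 (R : realType) (n : nat) (v : 'cV[R]_n) : 0 <= dotv v v.
Proof. by rewrite sumr_ge0 // => i _; rewrite -expr2 sqr_ge0. Qed.

Lemma spd_eigen_gt0 (R : realType) (n : nat) (A : 'M[R]_n) (v : 'cV[R]_n) (l : R) :
  spd A -> v != 0 -> A *m v = l *: v -> 0 < dotv v v /\ 0 < l.
Proof.
move=> [_ A_pd] v_neq0 Av; have := A_pd v v_neq0; rewrite Av dotvZr => lN_gt0.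
have N_gt0 : 0 < dotv v v.
  rewrite lt_def dotv_ge0 andbT; apply: contraTneq lN_gt0 => ->.
  by rewrite mulr0 ltxx.
by split; rewrite // -(pmulr_lgt0 _ N_gt0).
Qed.

Section EigenplaneCoordinates.
Variables (R : realType) (n : nat) (A : 'M[R]_n) (b xs v1 v2 : 'cV[R]_n) (l1 l2 : R).
Hypotheses (Av1 : A *m v1 = l1 *: v1) (Av2 : A *m v2 = l2 *: v2).
Hypotheses (xs_fixed : FP A b xs = xs) (v12_orth : dotv v1 v2 = 0).

Local Notation N1 := (dotv v1 v1).
Local Notation N2 := (dotv v2 v2).

Definition comb (c : R * R) : 'cV[R]_n := c.1 *: v1 + c.2 *: v2.

Lemma combZ (k : R) (c : R * R) : comb (k * c.1, k * c.2) = k *: comb c.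
Proof. by rewrite /comb scalerDr !scalerA. Qed.

Lemma enorm_comb (c : R * R) : enorm (comb c) = Num.sqrt (wnorm2 N1 N2 c).
Proof.
rewrite /enorm; congr Num.sqrt.
transitivity (\sum_(i < n) (c.1 ^+ 2 * (v1 i ord0 * v1 i ord0)
  + c.2 ^+ 2 * (v2 i ord0 * v2 i ord0) + 2 * c.1 * c.2 * (v1 i ord0 * v2 i ord0))).
  by apply: eq_bigr => i _; rewrite !mxE; ring.
rewrite !big_split /= -!mulr_sumr -!/(dotv _ _) v12_orth mulr0 addr0.
by rewrite /wnorm2 !(mulrC _ (dotv _ _)).
Qed.

Lemma FP_comb (c : R * R) : FP A b (xs + comb c) = xs + comb (l1 * c.1, l2 * c.2).
Proof.
rewrite /FP mulmxDr addrAC -/(FP A b xs) xs_fixed /comb mulmxDr -!scalemxAr Av1 Av2.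
by rewrite !scalerA !(mulrC l1) !(mulrC l2).
Qed.

Lemma aa_iterate_comb (al : R) (c : R * R) :
  FP A b (FP A b (xs + comb c))
    + al *: (FP A b (xs + comb c) - FP A b (FP A b (xs + comb c)))
  = xs + comb (aa_update l1 l2 al c).
Proof. by rewrite !FP_comb; apply/matrixP => i j; rewrite !mxE /=; ring. Qed.

Lemma aa_residual_comb (al : R) (c : R * R) :
  DFP A b (FP A b (xs + comb c))
    + al *: (DFP A b (xs + comb c) - DFP A b (FP A b (xs + comb c)))
  = comb (aa_residual l1 l2 al c).
Proof. by rewrite /DFP !FP_comb; apply/matrixP => i j; rewrite !mxE /=; ring. Qed.

Variables (c0 : R * R) (x : nat -> 'cV[R]_n) (alpha : nat -> R).
Hypotheses (N1_gt0 : 0 < N1) (N2_gt0 : 0 < N2).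
Hypotheses (l1_gt0 : 0 < l1) (l2_gt0 : 0 < l2) (l1_neq1 : l1 != 1) (l2_neq1 : l2 != 1).
Hypothesis run : AAstar1_run A b (xs + comb c0) x alpha.

Local Notation step := (aa_step l1 l2 N1 N2).

Lemma run_even k : x k.*2 = xs + comb (iter k step c0).
Proof.
elim: k => [|k IHk]; first exact: run.1.
have [x_odd alpha_min x_even] := run.2 k.*2 (negbT (odd_double k)).
rewrite doubleS x_even x_odd IHk aa_iterate_comb iterS; congr (_ + comb _).
apply: aa_update_minE => // be; have := alpha_min be.
by rewrite x_odd IHk !aa_residual_comb !enorm_comb ler_sqrt ?wnorm2_ge0 // ltW.
Qed.

Lemma run_odd k :
  x k.*2.+1 = xs + comb (l1 * (iter k step c0).1, l2 * (iter k step c0).2).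
Proof.
by have [-> _ _] := run.2 k.*2 (negbT (odd_double k)); rewrite run_even FP_comb.
Qed.

Lemma run_four_steps i : exists c f, [/\ x i = xs + comb c,
  x (i + 4)%N = xs + comb (f * c.1, f * c.2), 0 <= f & f <= aa_rate l1 l2].
Proof.
rewrite -(odd_double_half i); set k := i./2; set c := iter k step c0.
set f := aa_factor l1 l2 N1 N2 c.
have f_ge0 : 0 <= f := aa_factor_ge0 l1 l2 N1_gt0 N2_gt0 c.
have f_le : f <= aa_rate l1 l2.
  exact: aa_factor_le_rate N1_gt0 N2_gt0 l1_gt0 l2_gt0 l1_neq1 l2_neq1 c.
have two_steps : iter k.+2 step c0 = (f * c.1, f * c.2) by rewrite !iterS aa_step_twice.
case: (odd i); rewrite /= ?add1n ?add0n addn4 -!doubleS.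
- exists (l1 * c.1, l2 * c.2), f; split=> //; first exact: run_odd.
  by rewrite run_odd two_steps /= !(mulrCA _ f).
- exists c, f; split=> //; first exact: run_even.
  by rewrite run_even two_steps.
Qed.

Lemma run_error_contract i :
  enorm (x (i + 4)%N - xs) <= aa_rate l1 l2 * enorm (x i - xs).
Proof.
have [c [f [-> -> f_ge0 f_le]]] := run_four_steps i.
rewrite !(addrC xs) !addrK combZ enormZ ger0_norm //.
by rewrite ler_wpM2r // /enorm sqrtr_ge0.
Qed.

End EigenplaneCoordinates.

Theorem corollary6 (R : realType) (n : nat) (A : 'M[R]_n) (b : 'cV[R]_n)
  (xstar : 'cV[R]_n) (v1 v2 : 'cV[R]_n) (lambda1 lambda2 : R)
  (x0 : 'cV[R]_n) (x : nat -> 'cV[R]_n) (alpha : nat -> R) :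
  (1 < n)%N ->
  spd A ->
  (1%:M - A) \in unitmx ->
  FP A b xstar = xstar ->
  v1 != 0 -> v2 != 0 ->
  A *m v1 = lambda1 *: v1 -> A *m v2 = lambda2 *: v2 ->
  dotv v1 v2 = 0 ->
  ~ (1 < lambda1 /\ 1 < lambda2) ->
  lambda1 != 1 -> lambda2 != 1 ->
  (exists c1 c2 : R, x0 - xstar = c1 *: v1 + c2 *: v2) ->
  AAstar1_run A b x0 x alpha ->
  (fun i => enorm (x i - xstar)) @ \oo --> (0 : R).
Proof.
move=> _ A_spd _ xs_fixed v1_neq0 v2_neq0 Av1 Av2 v12_orth not_both_gt1 l1_neq1 l2_neq1.
move=> [c1 [c2 x0E]] run.
have [N1_gt0 l1_gt0] := spd_eigen_gt0 A_spd v1_neq0 Av1.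
have [N2_gt0 l2_gt0] := spd_eigen_gt0 A_spd v2_neq0 Av2.
have {}x0E : x0 = xstar + comb v1 v2 (c1, c2) by rewrite /comb /= -x0E addrC subrK.
rewrite {x0}x0E in run.
have contract := run_error_contract Av1 Av2 xs_fixed v12_orth
  N1_gt0 N2_gt0 l1_gt0 l2_gt0 l1_neq1 l2_neq1 run.
apply: (cvg_periodic_contraction _ (aa_rate_ge0 lambda1 lambda2)
  (aa_rate_lt1 l1_gt0 l2_gt0 l1_neq1 l2_neq1 not_both_gt1) _ contract) => //.
by move=> i; rewrite sqrtr_ge0.
Qed.
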